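(* Let $\{A^i\}_{i=1}^N$ and $\{\tilde A^i\}_{i=1}^N$ be injective tuples of complex $n\times n$ matrices (not necessarily in canonical form). The following are equivalent: (i) for every even $L\in2\mathbb N$ there exists $\alpha_L\in\mathbb R$ with $\mathrm{tr}[A^{i_1}\cdots A^{i_L}]=e^{i\alpha_L}\mathrm{tr}[\tilde A^{i_1}\cdots\tilde A^{i_L}]$ for all $i_1,\dots,i_L$; (ii) there exist an invertible matrix $M\in\mathrm{GL}_n(\mathbb C)$ and $z\in\mathrm U(1)$ with $A^i=zM^{-1}\tilde A^iM$ for all $i$. Here $z$ is unique and $M$ is unique up to multiplication by a nonzero complex number. The same equivalence holds when $L$ in (i) ranges over odd integers $L\in2\mathbb N+1$ instead.
   Context: A tuple $\{A^i\}_{i=1}^N$ of complex $n\times n$ matrices is injective if there is a fixed $l\in\mathbb N$ such that the products $A^{i_1}\cdots A^{i_l}$ over all $(i_1,\dots,i_l)\in\{1,\dots,N\}^l$ span $\mathrm M_n(\mathbb C)$. It is in canonical form if $\sum_iA^iA^{i\dagger}=1_n$. *)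

From HB Require Import structures.
From mathcomp Require Import all_boot all_order all_algebra.
From mathcomp Require Import all_classical all_reals.
From mathcomp Require Import trigo.
From mathcomp Require Import complex.
Set Implicit Arguments. Unset Strict Implicit. Unset Printing Implicit Defensive.
Import Order.TTheory GRing.Theory Num.Theory.
Local Open Scope ring_scope.

Definition word_prod (C : pzRingType) (n N l : nat)
  (A : 'I_N -> 'M[C]_n) (w : {ffun 'I_l -> 'I_N}) : 'M[C]_n :=
  \big[mulmx/1%:M]_(k < l) A (w k).

Definition injective_tuple (C : pzRingType) (n N : nat) (A : 'I_N -> 'M[C]_n) : Prop :=
  exists l : nat, (0 < l)%N /\
    forall X : 'M[C]_n, exists c : {ffun 'I_l -> 'I_N} -> C,
      X = \sum_(w : {ffun 'I_l -> 'I_N}) c w *: word_prod A w.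

Definition expi (R : realType) (a : R) : R[i] := (cos a +i* sin a)%C.

From HB Require Import structures.
From mathcomp Require Import all_boot all_order all_algebra.
From mathcomp Require Import all_classical all_reals.
From mathcomp Require Import trigo.
From mathcomp Require Import complex.
From mathcomp Require Import lra.
Set Implicit Arguments. Unset Strict Implicit. Unset Printing Implicit Defensive.
Import Order.TTheory GRing.Theory Num.Theory.
Local Open Scope ring_scope.

(* If the traces of A-words and B-words agree up to a phase in every other
   length, then for each large a every linear relation among the B-words of
   length a is also one among the A-words: pair it, under the trace form, with
   the words of a complementary length c such that a + c is an allowed length;
   those words span M_n, and the trace form is nondegenerate.  So B_w |-> A_w
   extends to a linear bijection phi_a of M_n, and concatenating words gives
   phi_a(X) phi_a(Y) = u phi_a(XY) for a scalar u.  By Skolem-Noether, phi_a is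
   u times conjugation by some M; comparing phi_(a+1) with phi_a yields
   A^i = z M^-1 B^i M, and |z| = 1 because z^L is one of the phases.  For
   uniqueness, M' M^-1 commutes with all B-words, hence is scalar. *)

Section LinearExtension.
Variables (F : fieldType) (I : finType) (p q r s : nat).

Lemma linear_extension (x : I -> 'M[F]_(p, q)) (y : I -> 'M[F]_(r, s)) :
  (forall c : I -> F, \sum_i c i *: x i = 0 -> \sum_i c i *: y i = 0) ->
  exists f : {linear 'M[F]_(p, q) -> 'M[F]_(r, s)}, forall i, f (x i) = y i.
Proof.
move=> rel.
pose rows m1 m2 (z : I -> 'M[F]_(m1, m2)) := \matrix_(k < #|I|) mxvec (z (enum_val k)).
have rowsE m1 m2 (z : I -> 'M[F]_(m1, m2)) (u : 'rV_#|I|) :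
    u *m rows _ _ z = mxvec (\sum_i u 0 (enum_rank i) *: z i).
  rewrite mulmx_sum_row linear_sum (reindex _ (onW_bij _ (enum_val_bij I))) /=.
  by apply: eq_bigr => k _; rewrite enum_valK rowK linearZ.
pose T := pinvmx (rows _ _ x) *m rows _ _ y.
exists (vec_mx \o mulmxr T \o mxvec : {linear _ -> _}) => i /=.
set k := enum_rank i; pose u := mxvec (x i) *m pinvmx (rows _ _ x) - delta_mx 0 k.
have rowk m1 m2 (z : I -> 'M[F]_(m1, m2)) : delta_mx 0 k *m rows _ _ z = mxvec (z i).
  by rewrite -rowE rowK enum_rankK.
have xrel : u *m rows _ _ x = 0.
  by rewrite mulmxBl mulmxKpV ?rowk ?subrr // -rowk submxMl.
have : u *m rows _ _ y = 0.
  move: xrel; rewrite !rowsE => /(canRL mxvecK); rewrite linear0 => /rel ->.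
  by rewrite linear0.
rewrite mulmxBl rowk -mulmxA -/T => /eqP; rewrite subr_eq0 => /eqP ->.
exact: mxvecK.
Qed.
End LinearExtension.

Section DeltaMx.
Variables (F : fieldType) (n : nat).
Local Notation E := (@delta_mx F _ _).

Lemma mulmx_delta m p (X : 'M[F]_(m, n)) (j : 'I_n) (l : 'I_p) :
  X *m E j l = \sum_i X i j *: E i l.
Proof.
rewrite {1}(matrix_sum_delta X) mulmx_suml; apply: eq_bigr => i _.
rewrite mulmx_suml (bigD1 j) //= big1 => [|k /negPf nk].
  by rewrite -scalemxAl mul_delta_mx addr0.
by rewrite -scalemxAl mul_delta_mx_0 ?nk ?scaler0.
Qed.

Lemma delta_mulmx m p (X : 'M[F]_(n, p)) (i : 'I_m) (j : 'I_n) :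
  E i j *m X = \sum_l X j l *: E i l.
Proof.
apply: trmx_inj; rewrite trmx_mul trmx_delta mulmx_delta linear_sum /=.
by apply: eq_bigr => l _; rewrite linearZ /= trmx_delta mxE.
Qed.

Lemma mxtrace_mul_delta (X : 'M[F]_n) i j : \tr (X *m E j i) = X i j.
Proof.
rewrite /mxtrace (bigD1 i) //= big1 => [|k /negPf ki]; rewrite mulmx_delta summxE.
- rewrite addr0 (bigD1 i) //= big1 => [|l /negPf li]; rewrite !mxE ?eqxx ?mulr1 ?addr0 //.
  by rewrite eq_sym li mulr0.
- by rewrite big1 // => l _; rewrite !mxE ki andbF mulr0.
Qed.

Lemma mxtrace_nondegenerate (X : 'M[F]_n) : (forall Y, \tr (X *m Y) = 0) -> X = 0.
Proof. by move=> trX0; apply/matrixP => i j; rewrite -mxtrace_mul_delta trX0 mxE. Qed.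

Lemma central_mx_scalar (X : 'M[F]_n) (i0 : 'I_n) :
  (forall Y, X *m Y = Y *m X) -> X = (X i0 i0)%:M.
Proof.
move=> cX; apply/matrixP => q p; have := congr1 (fun Z : 'M_n => Z q i0) (cX (E p i0)).
rewrite mulmx_delta delta_mulmx !summxE /= (bigD1 q) // [in RHS](bigD1 i0) //= !big1.
- by rewrite !addr0 !mxE !eqxx /= andbT mulr1 => ->; rewrite mulr_natr.
- by move=> l /negPf nl; rewrite !mxE [i0 == _]eq_sym nl andbF mulr0.
- by move=> i /negPf ni; rewrite !mxE eq_sym ni mulr0.
Qed.
End DeltaMx.

Section SkolemNoether.
Variables (F : fieldType) (n : nat) (f : {linear 'M[F]_n -> 'M[F]_n}) (i0 : 'I_n).
Hypotheses (fM : {morph f : X Y / X *m Y}) (f_inj : injective f).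
Local Notation E := (@delta_mx F _ _).

Let intertwiner Y := \sum_j f (E j i0) *m Y *m E i0 j.

Let intertwinerP X Y : f X *m intertwiner Y = intertwiner Y *m X.
Proof.
rewrite /intertwiner mulmx_sumr mulmx_suml.
under eq_bigr => j _ do rewrite !mulmxA -fM (mulmx_delta X) linear_sum mulmx_suml mulmx_suml.
rewrite exchange_big /=; apply: eq_bigr => i _.
rewrite -mulmxA delta_mulmx !mulmx_sumr; apply: eq_bigr => j _.
by rewrite linearZ -!scalemxAl -scalemxAr.
Qed.

Let intertwiner_neq0 : exists Y, intertwiner Y != 0.
Proof.
have fE0 : f (E i0 i0) != 0.
  apply/eqP; rewrite -(linear0 f) => /f_inj/matrixP/(_ i0 i0)/eqP.
  by rewrite !mxE !eqxx oner_eq0.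
suff [q Nq] : exists q, intertwiner (E q i0) != 0 by exists (E q i0).
apply/existsP; apply: contraNT fE0 => /existsPn N0.
apply/eqP; rewrite -[f _]mulmx1 mx1_sum_delta mulmx_sumr big1 // => q _.
have := N0 q; rewrite negbK => /eqP/(congr1 (mulmx^~ (E i0 q))).
rewrite /intertwiner mulmx_suml (bigD1 i0) //= big1 => [|j ji0].
  by rewrite mul0mx addr0 -!mulmxA !mul_delta_mx => <-.
by rewrite -mulmxA mul_delta_mx_0 ?mulmx0 // eq_sym.
Qed.

(* If [N *m v = 0] then [N *m X *m v = f X *m N *m v = 0] for all [X], and the
   [X *m v] exhaust all columns. *)
Let intertwiner_unit Y : intertwiner Y != 0 -> intertwiner Y \in unitmx.
Proof.
set N := intertwiner Y => N0; rewrite -unitmx_tr -row_free_unit -kermx_eq0.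
apply: contraR N0 => /rowV0Pn [v /sub_kermxP vN v0].
have [k vk] : exists k, v 0 k != 0.
  apply/existsP; apply: contraNT v0 => /existsPn v0.
  by apply/eqP/rowP => k; rewrite mxE; apply/eqP/negPn/v0.
suff colN0 j : col j N = 0.
  by apply/eqP/matrixP => i j; have /colP/(_ i) := colN0 j; rewrite !mxE.
have : N *m E j k *m v^T = 0.
  by rewrite -intertwinerP -mulmxA -[N *m _]trmxK trmx_mul trmxK vN trmx0 mulmx0.
rewrite -mulmxA delta_mulmx big_ord1 mxE -scalemxAr => /eqP.
by rewrite scaler_eq0 (negPf vk) /= -colE => /eqP.
Qed.

Lemma mx_morph_inner : exists2 M, M \in unitmx & forall X, f X = invmx M *m X *m M.
Proof.
have [Y /intertwiner_unit NU] := intertwiner_neq0.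
exists (invmx (intertwiner Y)); first by rewrite unitmx_inv.
by move=> X; rewrite invmxK -[f X](mulmxK NU) intertwinerP.
Qed.
End SkolemNoether.

Section Words.
Variables (F : fieldType) (n N : nat).
Local Notation word l := {ffun 'I_l -> 'I_N}.
Implicit Types (A B : 'I_N -> 'M[F]_n) (X Y : 'M[F]_n).

Definition word_cat a b (w : word a) (v : word b) : word (a + b) :=
  [ffun k => match fintype.split k with inl i => w i | inr j => v j end].

Definition word1 (i : 'I_N) : word 1 := [ffun=> i].

Lemma word_prodE A l (w : word l) : word_prod A w = \prod_(k < l) A (w k).
Proof. by []. Qed.

Lemma word_prod_cat A a b (w : word a) (v : word b) :
  word_prod A (word_cat w v) = word_prod A w *m word_prod A v.
Proof.
rewrite !word_prodE big_split_ord /=; congr (_ * _); apply: eq_bigr => k _; rewrite ffunE.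
  by have /= -> := unsplitK (inl _ k).
by have /= -> := unsplitK (inr _ k).
Qed.

Lemma word_prod1 A i : word_prod A (word1 i) = A i.
Proof. by rewrite word_prodE big_ord1 ffunE. Qed.

Definition words_span l A :=
  forall X, exists c : word l -> F, X = \sum_w c w *: word_prod A w.

Lemma word_comb_collect (I : finType) l (g : I -> word l) (d : I -> F) A :
  exists c : word l -> F, \sum_i d i *: word_prod A (g i) = \sum_w c w *: word_prod A w.
Proof.
exists (fun w => \sum_(i | g i == w) d i).
rewrite (partition_big g xpredT) //=; apply: eq_bigr => w _.
by rewrite scaler_suml; apply: eq_bigr => i /eqP ->.
Qed.

Lemma words_span_succ l A : (0 < l)%N -> words_span l A -> words_span l.+1 A.
Proof.
case: l => // l _ spanA X.
have [c one_comb] := spanA 1%:M.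
pose tail (w : word l.+1) := \prod_(k < l) A (w (lift ord0 k)).
pose u i := \sum_(w : word l.+1 | w ord0 == i) c w *: tail w.
have one_right : 1%:M = \sum_i A i *m u i.
  rewrite one_comb (partition_big (fun w : word l.+1 => w ord0) xpredT) //=.
  apply: eq_bigr => i _; rewrite mulmx_sumr; apply: eq_bigr => w /eqP <-.
  by rewrite word_prodE big_ord_recl -scalemxAr.
have /fin_all_exists [d uX] i : exists d : word l.+1 -> F,
    u i *m X = \sum_v d v *: word_prod A v by exact: spanA.
have [e collect] := word_comb_collect (fun p : 'I_N * word l.+1 => word_cat (word1 p.1) p.2)
  (fun p => d p.1 p.2) A.
exists e; rewrite -collect -[X]mul1mx one_right mulmx_suml.
rewrite -(pair_bigA _ (fun i v => d i v *: word_prod A (word_cat (word1 i) v))) /=.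
apply: eq_bigr => i _.
rewrite -mulmxA uX mulmx_sumr; apply: eq_bigr => v _.
by rewrite word_prod_cat word_prod1 scalemxAr.
Qed.

Lemma words_span_le l m A :
  (0 < l)%N -> (l <= m)%N -> words_span l A -> words_span m A.
Proof.
move=> l_gt0 /subnK <-; elim: (m - l)%N => // k IHk spanA.
by rewrite addSn; apply: words_span_succ (IHk spanA); rewrite addn_gt0 l_gt0 orbT.
Qed.

Lemma words_span_trace l A X :
  words_span l A -> (forall w : word l, \tr (X *m word_prod A w) = 0) -> X = 0.
Proof.
move=> spanA trX0; apply: mxtrace_nondegenerate => Y; have [c ->] := spanA Y.
rewrite mulmx_sumr linear_sum big1 // => w _ /=.
by rewrite -scalemxAr mxtraceZ trX0 mulr0.
Qed.

Lemma trace_relations a c A B (k : F) :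
  words_span c A ->
  (forall u : word (a + c), \tr (word_prod A u) = k * \tr (word_prod B u)) ->
  forall d : word a -> F,
    \sum_w d w *: word_prod B w = 0 -> \sum_w d w *: word_prod A w = 0.
Proof.
move=> spanA trAB d relB; apply: (words_span_trace spanA) => v.
rewrite mulmx_suml linear_sum /=.
transitivity (k * \tr ((\sum_w d w *: word_prod B w) *m word_prod B v)); last first.
  by rewrite relB mul0mx linear0 mulr0.
rewrite mulmx_suml linear_sum mulr_sumr; apply: eq_bigr => w _ /=.
by rewrite -!scalemxAl !mxtraceZ -!word_prod_cat trAB mulrCA.
Qed.

Definition transfer l A B (phi : 'M[F]_n -> 'M[F]_n) :=
  forall w : word l, phi (word_prod B w) = word_prod A w.

Lemma trace_transfer a c A B (k : F) :
  words_span c A ->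
  (forall u : word (a + c), \tr (word_prod A u) = k * \tr (word_prod B u)) ->
  exists phi : {linear 'M[F]_n -> 'M[F]_n}, transfer a A B phi.
Proof. by move=> spanA trAB; apply: linear_extension; apply: trace_relations. Qed.

Lemma transfer_comb l A B (phi : {linear 'M[F]_n -> 'M[F]_n}) (c : word l -> F) :
  transfer l A B phi ->
  phi (\sum_w c w *: word_prod B w) = \sum_w c w *: word_prod A w.
Proof.
by move=> phiT; rewrite linear_sum; apply: eq_bigr => w _; rewrite linearZ phiT.
Qed.

Lemma transfer_surj l A B (phi : {linear 'M[F]_n -> 'M[F]_n}) :
  words_span l A -> transfer l A B phi -> forall Y, exists X, phi X = Y.
Proof.
move=> spanA phiT Y; have [c ->] := spanA Y.
by exists (\sum_w c w *: word_prod B w); apply: transfer_comb.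
Qed.

Lemma transfer_cancel l A B (phi psi : {linear 'M[F]_n -> 'M[F]_n}) :
  words_span l B -> transfer l A B phi -> transfer l B A psi -> cancel phi psi.
Proof.
move=> spanB phiT psiT X; have [c ->] := spanB X.
by rewrite (transfer_comb _ phiT) (transfer_comb _ psiT).
Qed.

Lemma transfer_mul a b A B (f g h : {linear 'M[F]_n -> 'M[F]_n}) X Y :
  words_span a B -> words_span b B ->
  transfer a A B f -> transfer b A B g -> transfer (a + b) A B h ->
  h (X *m Y) = f X *m g Y.
Proof.
move=> spanBa spanBb fT gT hT; have [c ->] := spanBa X; have [d ->] := spanBb Y.
rewrite (transfer_comb _ fT) (transfer_comb _ gT) !mulmx_suml linear_sum.
apply: eq_bigr => w _.
rewrite !mulmx_sumr !linear_sum; apply: eq_bigr => v _.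
by rewrite -!scalemxAl -!scalemxAr !linearZ /= -!word_prod_cat hT !scalerA mulrC.
Qed.

Lemma words_span_mulmxI l A X Y :
  words_span l A -> (forall w : word l, X *m word_prod A w = Y *m word_prod A w) -> X = Y.
Proof.
move=> spanA XY; apply/eqP; rewrite -subr_eq0; apply/eqP.
by apply: (words_span_trace spanA) => w; rewrite mulmxBl XY subrr linear0.
Qed.

Section Similarity.
Variables (A B : 'I_N -> 'M[F]_n) (a : nat) (i0 : 'I_n).
Variables (phi psi phi1 phi2 phi21 : {linear 'M[F]_n -> 'M[F]_n}).
Hypotheses (a_gt0 : (0 < a)%N) (spanA : words_span a A) (spanB : words_span a B).
Hypotheses (phiT : transfer a A B phi) (psiT : transfer a B A psi).
Hypotheses (phi1T : transfer a.+1 A B phi1) (phi2T : transfer (a + a) A B phi2).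
Hypothesis phi21T : transfer (a + a.+1) A B phi21.

Let spanB1 : words_span a.+1 B := words_span_succ a_gt0 spanB.

Let phi2M X Y : phi2 (X *m Y) = phi X *m phi Y.
Proof. exact: transfer_mul spanB spanB phiT phiT phi2T. Qed.

Let phi21M X Y : phi21 (X *m Y) = phi X *m phi1 Y.
Proof. exact: transfer_mul spanB spanB1 phiT phi1T phi21T. Qed.

(* [a + a.+1] and [a.+1 + a] are the same length, so [phi21] also transfers
   words cut after their first [a.+1] letters. *)
Let phi21M' X Y : phi21 (Y *m X) = phi1 Y *m phi X.
Proof.
have phi21T' : transfer (a.+1 + a) A B phi21 by rewrite addnC.
exact: transfer_mul spanB1 spanB phi1T phiT phi21T'.
Qed.

Let phi_central_scalar U : (forall X, U *m phi X = phi X *m U) -> U = (U i0 i0)%:M.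
Proof.
move=> cU; apply: central_mx_scalar => Y.
by have [X <-] := transfer_surj spanA phiT Y; apply: cU.
Qed.

Let u := phi 1%:M i0 i0.
Let v := phi1 1%:M i0 i0.

Let phi_1 : phi 1%:M = u%:M.
Proof. by apply: phi_central_scalar => X; rewrite -!phi2M mul1mx mulmx1. Qed.

Let phi1_1 : phi1 1%:M = v%:M.
Proof. by apply: phi_central_scalar => X; rewrite -phi21M' -phi21M mul1mx mulmx1. Qed.

Let phiM X Y : phi X *m phi Y = u *: phi (X *m Y).
Proof. by rewrite -phi2M -[in LHS](mul1mx (X *m Y)) phi2M phi_1 mul_scalar_mx. Qed.

Let u_neq0 : u != 0.
Proof.
apply/eqP => u0; have [X X1] := transfer_surj spanA phiT 1%:M.
have /matrixP/(_ i0 i0)/eqP := phiM X X.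
by rewrite X1 mulmx1 u0 scale0r !mxE eqxx oner_eq0.
Qed.

(* [u *: phi1 Y] and [v *: phi Y] are both [phi21 (1 *m Y)]. *)
Let phi1E Y : phi1 Y = (v / u) *: phi Y.
Proof.
apply: (scalerI u_neq0); rewrite scalerA mulrC divfK //.
by rewrite -!mul_scalar_mx -phi_1 -phi1_1 -phi21M -phi21M'.
Qed.

Lemma transfer_similar :
  exists (M : 'M[F]_n) (z : F), M \in unitmx /\ forall i, A i = z *: (invmx M *m B i *m M).
Proof.
pose f := u^-1 \*: phi.
have fM : {morph f : X Y / X *m Y}.
  move=> X Y /=; rewrite -scalemxAl -scalemxAr phiM !scalerA.
  by rewrite divfK.
have f_inj : injective f.
  move=> X Y /= /(scalerI (invr_neq0 u_neq0)).
  exact/(can_inj (transfer_cancel spanB phiT psiT)).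
have [M M_unit fE] := mx_morph_inner i0 fM f_inj.
exists M, (v / u); split=> // i; rewrite -fE.
apply: (words_span_mulmxI spanA) => w.
have := phi1T (word_cat (word1 i) w).
rewrite (word_prod_cat B (word1 i)) (word_prod_cat A (word1 i)) !word_prod1 => <-.
by rewrite phi1E -(phiT w) /= -!scalemxAl phiM !scalerA divfK.
Qed.
End Similarity.

Lemma trace_proportional_similar A B (P : nat -> Prop) l (i0 : 'I_n) :
  (0 < l)%N -> words_span l A -> words_span l B ->
  (forall m, (0 < m)%N -> P m \/ P m.+1) ->
  (forall L, P L -> exists2 k : F, k != 0 &
     forall w : word L, \tr (word_prod A w) = k * \tr (word_prod B w)) ->
  exists (M : 'M[F]_n) (z : F), M \in unitmx /\ forall i, A i = z *: (invmx M *m B i *m M).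
Proof.
move=> l_gt0 spanA spanB P_often trAB.
have transfers m : (l <= m)%N ->
    (exists phi : {linear 'M[F]_n -> 'M[F]_n}, transfer m A B phi) /\
    (exists psi : {linear 'M[F]_n -> 'M[F]_n}, transfer m B A psi).
  move=> lm; have [c lc Pmc] : exists2 c, (l <= c)%N & P (m + c)%N.
    have [|Pml|Pml1] := P_often (m + l)%N; first by rewrite addn_gt0 l_gt0 orbT.
      by exists l.
    by exists l.+1; rewrite ?addnS.
  have [k k_neq0 trk] := trAB _ Pmc.
  split; first exact: trace_transfer (words_span_le l_gt0 lc spanA) trk.
  apply: (trace_transfer (k := k^-1) (words_span_le l_gt0 lc spanB)) => u.
  by rewrite trk mulrA mulVf ?mul1r.
have [[phi phiT] [psi psiT]] := transfers l (leqnn l).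
have [[phi1 phi1T] _] := transfers l.+1 (leqnSn l).
have [[phi2 phi2T] _] := transfers (l + l)%N (leq_addr l l).
have [[phi21 phi21T] _] := transfers (l + l.+1)%N (leq_addr _ l).
exact: (transfer_similar i0 l_gt0 spanA spanB phiT psiT phi1T phi2T phi21T).
Qed.

Lemma word_prod_similar A B (M : 'M[F]_n) (z : F) :
  M \in unitmx -> (forall i, A i = z *: (invmx M *m B i *m M)) ->
  forall l (w : word l), word_prod A w = z ^+ l *: (invmx M *m word_prod B w *m M).
Proof.
move=> M_unit simAB; suff prodE l (f : 'I_l -> 'I_N) : \prod_(k < l) A (f k) =
    z ^+ l *: (invmx M *m \prod_(k < l) B (f k) *m M) by move=> l w; apply: prodE.
elim: l f => [|l IHl] f.
  by rewrite !big_ord0 expr0 scale1r mulmx1 mulVmx.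
rewrite !big_ord_recr /= IHl simAB -!mulmxE -scalemxAl -scalemxAr scalerA exprSr.
by congr (_ *: _); rewrite !mulmxA mulmxK.
Qed.

Lemma mxtrace_similar (M X : 'M[F]_n) (z : F) :
  M \in unitmx -> \tr (z *: (invmx M *m X *m M)) = z * \tr X.
Proof. by move=> M_unit; rewrite mxtraceZ mxtrace_mulC mulmxA mulmxV ?mul1mx. Qed.

Lemma words_span_trace_neq0 l B (i0 : 'I_n) :
  words_span l B -> exists w : word l, \tr (word_prod B w) != 0.
Proof.
move=> spanB; apply/existsP; apply: contraT => /existsPn tr0.
have one0 : 1%:M = 0 :> 'M[F]_n.
  by apply: (words_span_trace spanB) => w; rewrite mul1mx; apply/eqP/negPn/tr0.
by have /matrixP/(_ i0 i0)/eqP := one0; rewrite !mxE eqxx oner_eq0.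
Qed.

Lemma similar_trace_ratio A B (M : 'M[F]_n) (z k : F) L (i0 : 'I_n) :
  M \in unitmx -> (forall i, A i = z *: (invmx M *m B i *m M)) -> words_span L B ->
  (forall w : word L, \tr (word_prod A w) = k * \tr (word_prod B w)) -> z ^+ L = k.
Proof.
move=> M_unit simAB spanB trAB; have [w trw] := words_span_trace_neq0 i0 spanB.
by apply: (mulIf trw); rewrite -trAB (word_prod_similar M_unit simAB) mxtrace_similar.
Qed.

Lemma commute_words_span l B (Q : 'M[F]_n) :
  words_span l B -> (forall i, Q *m B i = B i *m Q) -> forall X, Q *m X = X *m Q.
Proof.
move=> spanB cQB X; have [c ->] := spanB X; rewrite mulmx_sumr mulmx_suml.
apply: eq_bigr => w _; rewrite -scalemxAl -scalemxAr; congr (_ *: _).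
by rewrite word_prodE mulmxE; apply: commr_prod => i; rewrite /GRing.comm -!mulmxE cQB.
Qed.

Lemma conj_eq_scalar (M M' : 'M[F]_n) (i0 : 'I_n) :
  M \in unitmx -> M' \in unitmx ->
  (forall X, M' *m invmx M *m X = X *m (M' *m invmx M)) ->
  exists c : F, c != 0 /\ M' = c *: M.
Proof.
move=> M_unit M'_unit /(central_mx_scalar i0); set q := _ i0 i0 => Qq.
have M'E : M' = q *: M by rewrite -mul_scalar_mx -Qq mulmxKV.
exists q; split=> //; apply/eqP => q0; have := mulmxV M'_unit.
rewrite M'E q0 scale0r mul0mx => /matrixP/(_ i0 i0)/eqP.
by rewrite !mxE eqxx eq_sym oner_eq0.
Qed.

Lemma similarity_unique A B l (i0 : 'I_n) (M M' : 'M[F]_n) (z z' : F) :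
  (0 < l)%N -> words_span l B -> M \in unitmx -> M' \in unitmx -> z != 0 ->
  (forall i, A i = z *: (invmx M *m B i *m M)) ->
  (forall i, A i = z' *: (invmx M' *m B i *m M')) ->
  z' = z /\ exists c : F, c != 0 /\ M' = c *: M.
Proof.
move=> l_gt0 spanB M_unit M'_unit z_neq0 simAB simAB'.
have z'E m : (l <= m)%N -> z' ^+ m = z ^+ m.
  move=> lm; apply: (similar_trace_ratio i0 M'_unit simAB' (words_span_le l_gt0 lm spanB)).
  by move=> w; rewrite (word_prod_similar M_unit simAB) mxtrace_similar.
have z'z : z' = z.
  apply: (mulIf (expf_neq0 l z_neq0)).
  by rewrite -{1}(z'E l) // -!exprS z'E.
split=> //; apply: (conj_eq_scalar i0 M_unit M'_unit (commute_words_span spanB _)) => i.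
have conjE : invmx M *m B i *m M = invmx M' *m B i *m M'.
  by apply: (scalerI z_neq0); rewrite -simAB -z'z -simAB'.
transitivity (M' *m (invmx M *m B i *m M) *m invmx M); first by rewrite !mulmxA mulmxK.
by rewrite conjE !mulmxA mulmxV // mul1mx.
Qed.
End Words.

Section UnitPhases.
Variable R : realType.

Lemma norm_expi (a : R) : `|expi a| = 1.
Proof. by rewrite /expi normc_def /= cos2Dsin2 sqrtr1. Qed.

Lemma expi_neq0 (a : R) : expi a != 0.
Proof. by rewrite -normr_eq0 norm_expi oner_eq0. Qed.

Lemma unit_circle_expi (c : R[i]) : `|c| = 1 -> exists a : R, expi a = c.
Proof.
case: c => x y; rewrite normc_def /= => -[xy1].
have {xy1} xy1 : x ^+ 2 + y ^+ 2 = 1.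
  by rewrite -[LHS]sqr_sqrtr ?xy1 ?expr1n // addr_ge0 // sqr_ge0.
have x_bound : -1 <= x <= 1 by apply/andP; split; nra.
have [_ cos_acos] := acos_def x_bound.
have y2E : 1 - x ^+ 2 = y ^+ 2 by rewrite -xy1 addrAC subrr add0r.
exists (if 0 <= y then acos x else - acos x); rewrite /expi; case: ifP => y_ge0.
  by rewrite cos_acos sin_acos // y2E sqrtr_sqr ger0_norm.
by rewrite cosN sinN cos_acos sin_acos // y2E sqrtr_sqr ltr0_norm ?opprK // ltNge y_ge0.
Qed.
End UnitPhases.

Section PhaseTraces.
Variables (R : realType) (n N : nat) (A B : 'I_N -> 'M[R[i]]_n).

Lemma similar_phase_traces (M : 'M[R[i]]_n) (z : R[i]) :
  M \in unitmx -> `|z| = 1 -> (forall i, A i = z *: (invmx M *m B i *m M)) ->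
  forall L, exists alpha : R, forall w : {ffun 'I_L -> 'I_N},
    \tr (word_prod A w) = expi alpha * \tr (word_prod B w).
Proof.
move=> M_unit z1 simAB L.
have [alpha alphaE] : exists alpha : R, expi alpha = z ^+ L.
  by apply: unit_circle_expi; rewrite normrX z1 expr1n.
by exists alpha => w; rewrite alphaE (word_prod_similar M_unit simAB) mxtrace_similar.
Qed.

Lemma phase_traces_similar (P : nat -> Prop) l (i0 : 'I_n) :
  (0 < l)%N -> words_span l A -> words_span l B ->
  (forall m, (0 < m)%N -> P m \/ P m.+1) ->
  (forall L, P L -> exists alpha : R, forall w : {ffun 'I_L -> 'I_N},
    \tr (word_prod A w) = expi alpha * \tr (word_prod B w)) ->
  exists (M : 'M[R[i]]_n) (z : R[i]),
    M \in unitmx /\ `|z| = 1 /\ forall i, A i = z *: (invmx M *m B i *m M).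
Proof.
move=> l_gt0 spanA spanB P_often trAB.
have trAB' L : P L -> exists2 k : R[i], k != 0 &
    forall w : {ffun 'I_L -> 'I_N}, \tr (word_prod A w) = k * \tr (word_prod B w).
  by move=> /trAB [alpha trE]; exists (expi alpha); first exact: expi_neq0.
have [M [z [M_unit simAB]]] := trace_proportional_similar i0 l_gt0 spanA spanB P_often trAB'.
exists M, z; split=> //; split=> //.
have [L [lL PL]] : exists L, (l <= L)%N /\ P L.
  by have [Pl|Pl1] := P_often l l_gt0; [exists l | exists l.+1].
have [alpha trE] := trAB L PL.
have zL := similar_trace_ratio i0 M_unit simAB (words_span_le l_gt0 lL spanB) trE.
have : `|z| ^+ L = 1 by rewrite -normrX zL norm_expi.
by move/eqP; rewrite pexpr_eq1 ?(leq_trans l_gt0 lL) // => /eqP.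
Qed.
End PhaseTraces.

Theorem mainTheorem6 (R : realType) (n N : nat) (A At : 'I_N -> 'M[R[i]]_n) :
  (0 < n)%N ->
  injective_tuple A -> injective_tuple At ->
  let cond_ii :=
    exists (M : 'M[R[i]]_n) (z : R[i]),
      M \in unitmx /\ `|z| = 1 /\
      forall i : 'I_N, A i = z *: (invmx M *m At i *m M) in
  let cond_i (P : nat -> Prop) :=
    forall L : nat, P L -> exists alpha : R,
      forall w : {ffun 'I_L -> 'I_N},
        \tr (word_prod A w) = expi alpha * \tr (word_prod At w) in
  ((cond_i (fun L => (0 < L)%N /\ ~~ odd L)) <-> cond_ii) /\
  ((cond_i (fun L => odd L)) <-> cond_ii) /\
  (forall (M M' : 'M[R[i]]_n) (z z' : R[i]),
      M \in unitmx -> `|z| = 1 ->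
      (forall i : 'I_N, A i = z *: (invmx M *m At i *m M)) ->
      M' \in unitmx -> `|z'| = 1 ->
      (forall i : 'I_N, A i = z' *: (invmx M' *m At i *m M')) ->
      z' = z /\ exists c : R[i], c != 0 /\ M' = c *: M).
Proof.
move=> n_gt0 [lA [lA_gt0 spanA]] [lB [lB_gt0 spanB]] cond_ii cond_i.
pose i0 : 'I_n := Ordinal n_gt0; pose l := maxn lA lB.
have l_gt0 : (0 < l)%N by rewrite leq_max lA_gt0.
have spanAl : words_span l A by apply: words_span_le lA_gt0 (leq_maxl _ _) spanA.
have spanBl : words_span l At by apply: words_span_le lB_gt0 (leq_maxr _ _) spanB.
have equiv P : (forall m, (0 < m)%N -> P m \/ P m.+1) -> cond_i P <-> cond_ii.
  move=> P_often.
  split; first exact: phase_traces_similar i0 l_gt0 spanAl spanBl P_often.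
  by move=> [M [z [M_unit [z1 simAB]]]] L _; apply: similar_phase_traces M_unit z1 simAB L.
split; [|split].
- by apply: equiv => m m_gt0; case: (boolP (odd m)) => odd_m; [right | left]; rewrite /= ?odd_m.
- by apply: equiv => m _; case: (boolP (odd m)) => odd_m; [left | right]; rewrite /= ?odd_m.
move=> M M' z z' M_unit z1 simAB M'_unit _ simAB'.
have z_neq0 : z != 0 by rewrite -normr_eq0 z1 oner_eq0.
exact: (similarity_unique i0 lB_gt0 spanB M_unit M'_unit z_neq0 simAB simAB').
Qed.
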